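(* Let $R,S$ be rings, $M$ an $(S,R)$-bimodule, $m_1,\dots,m_n\in M$ and $f_1,\dots,f_n\in{}^*M={}_S\mathrm{Hom}(M,S)$. Then $$m\otimes_R f=\sum_{i=1}^n m_i\otimes_R\big((?)f_i\cdot(m)f\big)\quad\text{in } M\otimes_R{}_S\mathrm{Hom}(M,Q)$$ for every left $S$-module $Q$, every $f\in{}_S\mathrm{Hom}(M,Q)$ and every $m\in M$, if and only if $$m\otimes_R \mathrm{id}_M=\sum_{i=1}^n m_i\otimes_R\big((?)f_i\, m\big)\quad\text{in } M\otimes_R{}_S\mathrm{End}(M)$$ for every $m\in M$.
   Context: Homomorphisms of left $S$-modules are written on the right of their arguments: $(m)f$. For $Q\in{}_S\mathcal{M}$, ${}_S\mathrm{Hom}(M,Q)$ is a left $R$-module via $(m)(r\cdot f)=(mr)f$, and the tensor products above are over this structure and the right $R$-structure of $M$. For $f_i\in{}^*M$ and $q\in Q$, $(?)f_i\cdot q$ (written $(?)f_i q$) denotes the left $S$-linear map $M\to Q$, $x\mapsto ((x)f_i)\,q$. *)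

From HB Require Import structures.
From mathcomp Require Import all_boot all_order all_algebra.
Set Implicit Arguments. Unset Strict Implicit. Unset Printing Implicit Defensive.
Import GRing.Theory.
Local Open Scope ring_scope.

Record bimod (S R : pzRingType) (M : lmodType S) := Bimod {
  ract : M -> R -> M;
  ractDl : forall m m' r, ract (m + m') r = ract m r + ract m' r;
  ractDr : forall m r r', ract m (r + r') = ract m r + ract m r';
  ractA : forall m r r', ract (ract m r) r' = ract m (r * r');
  ract1 : forall m, ract m 1 = m;
  ract_scale : forall s m r, ract (s *: m) r = s *: ract m r
}.

Definition slin (S : pzRingType) (M Q : lmodType S) (f : M -> Q) :=
  forall (s : S) (x y : M), f (s *: x + y) = s *: f x + f y.

Definition SHom (S : pzRingType) (M Q : lmodType S) := {f : M -> Q | slin f}.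

Definition happ (S : pzRingType) (M Q : lmodType S) (f : SHom M Q) : M -> Q :=
  proj1_sig f.

Section HomOps.
Variables (S R : pzRingType) (M : lmodType S).

Lemma slin_add (Q : lmodType S) (f g : M -> Q) :
  slin f -> slin g -> slin (fun x => f x + g x).
Proof.
move=> hf hg s x y; rewrite hf hg scalerDr.
by rewrite -!addrA; congr (_ + _); rewrite addrCA.
Qed.

Definition hadd (Q : lmodType S) (f g : SHom M Q) : SHom M Q :=
  exist _ (fun x => happ f x + happ g x) (slin_add (proj2_sig f) (proj2_sig g)).

Lemma slin_act (B : bimod R M) (Q : lmodType S) (r : R) (f : M -> Q) :
  slin f -> slin (fun x => f (ract B x r)).
Proof. by move=> hf s x y; rewrite ractDl ract_scale hf. Qed.

(* left R-structure on Hom(M,Q):  (m)(r . f) = (m r) f *)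
Definition hact (B : bimod R M) (Q : lmodType S) (r : R) (f : SHom M Q) : SHom M Q :=
  exist _ (fun x => happ f (ract B x r)) (slin_act B r (proj2_sig f)).

Lemma slin_id : slin (fun x : M => x).
Proof. by []. Qed.

Definition hid : SHom M M := exist _ (fun x => x) slin_id.

Lemma slin_scal (Q : lmodType S) (g : M -> S^o) (q : Q) :
  slin g -> slin (fun x => (g x : S) *: q).
Proof. by move=> hg s x y; rewrite hg scalerDl scalerA. Qed.

(* (?)g . q  :  x |-> ((x)g) q,  for g in *M = _S Hom(M,S) and q in Q *)
Definition hscal (Q : lmodType S) (g : SHom M S^o) (q : Q) : SHom M Q :=
  exist _ (fun x => (happ g x : S) *: q) (slin_scal q (proj2_sig g)).
End HomOps.

(* A tensor is represented by a finite list of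
   simple tensors [:: (m_1,n_1); ...] standing for sum_i m_i (x) n_i.
   Two such lists represent the same element of M (x)_R N iff they are
   identified by every R-balanced biadditive map into an abelian group
   (universal property defining M (x)_R N). *)
Definition balanced (R : pzRingType) (M : zmodType) (ra : M -> R -> M)
  (N : Type) (addN : N -> N -> N) (la : R -> N -> N)
  (A : zmodType) (b : M -> N -> A) :=
  [/\ forall m m' x, b (m + m') x = b m x + b m' x,
      forall m x y, b m (addN x y) = b m x + b m y
    & forall m r x, b (ra m r) x = b m (la r x)].

Definition tens_eq (R : pzRingType) (M : zmodType) (ra : M -> R -> M)
  (N : Type) (addN : N -> N -> N) (la : R -> N -> N) (s t : seq (M * N)) :=
  forall (A : zmodType) (b : M -> N -> A), balanced ra addN la b ->
    \sum_(p <- s) b p.1 p.2 = \sum_(p <- t) b p.1 p.2.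

Definition tensHom_eq (S R : pzRingType) (M : lmodType S) (B : bimod R M)
  (Q : lmodType S) (s t : seq (M * SHom M Q)) :=
  tens_eq (ract B) (@hadd S M Q) (@hact S R M B Q) s t.

From HB Require Import structures.
From mathcomp Require Import all_boot all_order all_algebra.
From Stdlib Require Import ProofIrrelevance FunctionalExtensionality.
Set Implicit Arguments. Unset Strict Implicit.
Import GRing.Theory.
Local Open Scope ring_scope.

(* Post-composition with f : M -> Q is an additive, R-linear map
   _S End(M) -> _S Hom(M,Q) sending id_M to f and (?)f_i m to (?)f_i (m)f.
   Tensoring it with M transports the identity in M (x)_R _S End(M) to the
   one in M (x)_R _S Hom(M,Q); the converse is the case Q = M, f = id_M. *)

Section SLinear.
Variables (S : pzRingType) (M Q : lmodType S).

Lemma shom_ext (f g : SHom M Q) : happ f =1 happ g -> f = g.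
Proof.
case: f g => f hf [g hg] /= efg.
have {}efg : f = g by apply: functional_extensionality.
by subst g; congr exist; apply: proof_irrelevance.
Qed.

Lemma slin0 (f : M -> Q) : slin f -> f 0 = 0.
Proof.
move=> hf; apply: (addrI (f 0)).
by have := hf 1 0 0; rewrite !scale1r !addr0.
Qed.

Lemma slinD (f : M -> Q) x y : slin f -> f (x + y) = f x + f y.
Proof. by move=> hf; have := hf 1 x y; rewrite !scale1r. Qed.

Lemma slinZ (f : M -> Q) s x : slin f -> f (s *: x) = s *: f x.
Proof. by move=> hf; have := hf s x 0; rewrite addr0 slin0 // addr0. Qed.

End SLinear.

Section Composition.
Variables (S : pzRingType) (M N Q : lmodType S).

Lemma slin_comp (f : N -> Q) (g : M -> N) :
  slin f -> slin g -> slin (fun x => f (g x)).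
Proof. by move=> hf hg s x y; rewrite hg hf. Qed.

Definition hcomp (f : SHom N Q) (g : SHom M N) : SHom M Q :=
  exist _ (fun x => happ f (happ g x)) (slin_comp (proj2_sig f) (proj2_sig g)).

Lemma hcomp_hadd (f : SHom N Q) (g h : SHom M N) :
  hcomp f (hadd g h) = hadd (hcomp f g) (hcomp f h).
Proof. apply: shom_ext => x; rewrite /happ /=; exact: slinD _ _ (svalP f). Qed.

Lemma hcomp_hscal (f : SHom N Q) (g : SHom M S^o) (y : N) :
  hcomp f (hscal g y) = hscal g (happ f y).
Proof. apply: shom_ext => x; rewrite /happ /=; exact: slinZ _ _ (svalP f). Qed.

End Composition.

Section PostComposition.
Variables (S R : pzRingType) (M : lmodType S) (B : bimod R M) (Q : lmodType S).
Variable f : SHom M Q.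

Lemma hcomp_hid : hcomp f (@hid S M) = f.
Proof. exact: shom_ext. Qed.

Lemma hcomp_hact r (g : SHom M M) : hcomp f (hact B r g) = hact B r (hcomp f g).
Proof. exact: shom_ext. Qed.

Lemma balanced_hcomp (A : zmodType) (b : M -> SHom M Q -> A) :
  balanced (ract B) (@hadd S M Q) (@hact S R M B Q) b ->
  balanced (ract B) (@hadd S M M) (@hact S R M B M) (fun x g => b x (hcomp f g)).
Proof.
case=> bDl bDr bA; split=> [x x' g | x g h | x r g].
- exact: bDl.
- by rewrite hcomp_hadd bDr.
- by rewrite hcomp_hact bA.
Qed.

Lemma tensHom_eq_hcomp (s t : seq (M * SHom M M)) :
  tensHom_eq B s t ->
  tensHom_eq B [seq (p.1, hcomp f p.2) | p <- s] [seq (p.1, hcomp f p.2) | p <- t].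
Proof. move=> st A b bb; rewrite !big_map; exact: st _ _ (balanced_hcomp bb). Qed.

End PostComposition.

Theorem lemma3p7 (R S : pzRingType) (M : lmodType S) (B : bimod R M)
  (n : nat) (ms : 'I_n -> M) (fs : 'I_n -> SHom M S^o) :
  (forall (Q : lmodType S) (f : SHom M Q) (m : M),
      tensHom_eq B [:: (m, f)]
        [seq (ms i, hscal (fs i) (happ f m)) | i <- enum 'I_n])
  <->
  (forall m : M,
      tensHom_eq B [:: (m, @hid S M)]
        [seq (ms i, hscal (fs i) m) | i <- enum 'I_n]).
Proof.
split=> [H m | H Q f m]; first exact: H.
have := tensHom_eq_hcomp f (H m).
rewrite /= hcomp_hid -map_comp.
by under eq_map => i do rewrite /= hcomp_hscal.
Qed.
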